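(* Let $G$ be a graph on $N\ge 21$ vertices with edges $e_1,\dots,e_m$, and for $0\le k\le m$ let $G_k$ be the graph on the same vertex set with edge set $\{e_1,\dots,e_k\}$. Fix $k$ with $0\le k\le m-1$, set $S=\mathcal I(G_k)$, $H=\mathcal I(G_{k+1})$ and $n=2N^2$. Let $A_1,\dots,A_n\in S$ be initial states (with an arbitrary joint distribution), and for each $i\in[n]$ run the BIDC Markov chain on $G_k$ from $A_i$ for $n$ steps, with fresh random choices independent across steps, chains, and of the initial states, producing states $X_{i0}=A_i,X_{i1},\dots,X_{in}$. Let $X$ be the $n\times n$ matrix whose $i$-th row is $(X_{i1},\dots,X_{in})$. Then the probability $p(X)$ that $X$ has no $H$-PM satisfies $p(X)\le e^{-N}$.
   Context: $\mathcal I(F)$ is the family of independent sets (including $\emptyset$) of a graph $F$. The Basic Insert/Delete Chain (BIDC) on a graph $F=(V,E)$ has state space $\mathcal I(F)$; from state $X_t$ it draws a vertex $u\in V$ uniformly at random and sets $X_{t+1}=X_t\setminus\{u\}$ if $u\in X_t$, $X_{t+1}=X_t\cup\{u\}$ if $u\notin X_t$ and $X_t\cup\{u\}\in\mathcal I(F)$, and $X_{t+1}=X_t$ otherwise. A perfect matching (PM) of an $n\times n$ matrix is $M=((i_1,1),\dots,(i_n,n))$ with $\{i_1,\dots,i_n\}=[n]$; an $H$-PM is a PM with $X_{i_j,j}\in H$ for all $j$. *)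

From mathcomp Require Import all_boot all_order all_algebra all_fingroup.
From mathcomp Require Import all_classical all_reals all_analysis.
Set Implicit Arguments. Unset Strict Implicit. Unset Printing Implicit Defensive.

Definition adj {N : nat} (E : seq ('I_N * 'I_N)) (x y : 'I_N) : bool :=
  ((x, y) \in E) || ((y, x) \in E).

Definition simple_edges {N : nat} (E : seq ('I_N * 'I_N)) : Prop :=
  (forall e, e \in E -> e.1 != e.2) /\ uniq [seq [set e.1; e.2] | e <- E].

Definition indep {N : nat} (E : seq ('I_N * 'I_N)) (X : {set 'I_N}) : bool :=
  [forall x in X, forall y in X, ~~ adj E x y].

Definition bidc_step {N : nat} (E : seq ('I_N * 'I_N)) (X : {set 'I_N}) (u : 'I_N)
  : {set 'I_N} :=
  if u \in X then X :\ u
  else if indep E (u |: X) then u |: X else X.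

Fixpoint bidc_run {N : nat} (E : seq ('I_N * 'I_N)) (X : {set 'I_N}) (s : seq 'I_N)
  : {set 'I_N} :=
  match s with
  | [::] => X
  | u :: s' => bidc_run E (bidc_step E X u) s'
  end.

Definition nn (N : nat) : nat := 2 * N ^ 2.

(* The matrix X: entry (i, j) (0-based j) is the state of chain i after j+1 steps,
   where the vertex chosen by chain i at step l+1 is u (i, l). *)
Definition Xmat {N : nat} (E : seq ('I_N * 'I_N)) (A : {ffun 'I_(nn N) -> {set 'I_N}})
  (u : {ffun 'I_(nn N) * 'I_(nn N) -> 'I_N}) (i j : 'I_(nn N)) : {set 'I_N} :=
  bidc_run E (A i) [seq u (i, l) | l <- take j.+1 (enum 'I_(nn N))].

(* The matrix M has an H-perfect matching, H = independent sets of E: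
   a permutation sigma with column j matched to row sigma j. *)
Definition has_H_PM {n N : nat} (E : seq ('I_N * 'I_N)) (M : 'I_n -> 'I_n -> {set 'I_N})
  : bool :=
  [exists s : {perm 'I_n}, [forall j : 'I_n, indep E (M (s j) j)]].

From mathcomp Require Import all_boot all_order all_algebra all_fingroup.
From mathcomp Require Import reals exp sequences.
From mathcomp Require Import ring lra zify.
Set Implicit Arguments. Unset Strict Implicit. Unset Printing Implicit Defensive.
Import Order.TTheory GRing.Theory Num.Theory.

(* If X has no H-perfect matching then, by the Frobenius-Koenig theorem
   (derived from Hall's theorem), there are rows S and columns T with
   |S| + |T| > n such that no entry X_ij, i in S, j in T, lies in H.  Every
   state of the chains lies in I(G_k), and from such a state at most N - 2 of
   the N vertex choices lead to a state containing both ends of e_(k+1), which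
   is the only way to leave H.  The choices of different steps and chains are
   independent, so a fixed S x T is bad with probability at most
   (1 - 2/N)^(|S| |T|); as max(|S|, |T|) > N^2, the sum over all pairs (S, T)
   is at most e^(-N). *)

Section Hall.
Variables (R C : finType) (r0 : R).
Implicit Types (adj : C -> {set R}) (B : {set R}) (X Y Z : {set C}).

Definition nbh adj Y : {set R} := \bigcup_(y in Y) adj y.

Definition hall_condition adj X := forall Y, Y \subset X -> #|Y| <= #|nbh adj Y|.

Definition matching adj X (f : C -> R) :=
  {in X &, injective f} /\ {in X, forall x, f x \in adj x}.

Lemma nbhD adj B Y : nbh (fun y => adj y :\: B) Y = nbh adj Y :\: B.
Proof.
apply/setP=> r; rewrite inE; apply/bigcupP/andP.
  by case=> y yY /setDP[ry rB]; split=> //; apply/bigcupP; exists y.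
by case=> rB /bigcupP[y yY ry]; exists y => //; apply/setDP.
Qed.

Lemma nbhU adj Y Z : nbh adj (Y :|: Z) = nbh adj Y :|: nbh adj Z.
Proof. exact: bigcup_setU. Qed.

Lemma nbh1 adj x : nbh adj [set x] = adj x.
Proof. exact: big_set1. Qed.

Lemma sub_nbh adj Y y : y \in Y -> adj y \subset nbh adj Y.
Proof. exact: bigcup_sup. Qed.

Lemma matching_glue adj X Y B f1 f2 : Y \subset X ->
  matching adj Y f1 -> {in Y, forall y, f1 y \in B} ->
  matching (fun x => adj x :\: B) (X :\: Y) f2 ->
  matching adj X (fun x => if x \in Y then f1 x else f2 x).
Proof.
move=> sYX [inj1 adj1] f1B [inj2 adj2].
have XY x : x \in X -> x \notin Y -> x \in X :\: Y by move=> ? ?; apply/setDP.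
have f2B x : x \in X -> x \notin Y -> f2 x \notin B.
  by move=> xX xY; have /setDP[] := adj2 x (XY x xX xY).
split=> [x y xX yX|x xX]; last first.
  by case: ifP => xY; [apply: adj1 | have /setDP[] := adj2 x (XY x xX (negbT xY))].
case: ifP => xY; case: ifP => yY.
- exact: inj1.
- by move=> fxy; case/negP: (f2B y yX (negbT yY)); rewrite -fxy f1B.
- by move=> fxy; case/negP: (f2B x xX (negbT xY)); rewrite fxy f1B.
- by apply: inj2; apply: XY; rewrite ?xY ?yY.
Qed.

Section InductionStep.
Variable m : nat.
Hypothesis IH : forall adj X, #|X| <= m -> hall_condition adj X ->
  exists f, matching adj X f.

(* A nonempty proper subset Y0 with as many neighbours as elements is matched
   onto its neighbourhood; the rest of X still satisfies Hall's condition once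
   that neighbourhood is removed. *)
Lemma hall_tight_step adj X Y0 : #|X| = m.+1 -> hall_condition adj X ->
  Y0 != set0 -> Y0 \proper X -> #|nbh adj Y0| <= #|Y0| ->
  exists f, matching adj X f.
Proof.
move=> cardX hallX Y0n0 Y0X tight; have sY0X := proper_sub Y0X.
set B := nbh adj Y0.
have [f1 match1] : exists f1, matching adj Y0 f1.
  apply: IH => [|Y sY]; last by apply: hallX; apply: subset_trans sY sY0X.
  by rewrite -ltnS -cardX proper_card.
have [f2 match2] : exists f2, matching (fun x => adj x :\: B) (X :\: Y0) f2.
  apply: IH => [|Z sZ].
    by rewrite cardsDS // cardX; have := card_gt0 Y0; rewrite Y0n0; lia.
  have disjZ : Z :&: Y0 = set0.
    apply/setP=> x; rewrite !inE; apply/negbTE/andP=> -[/(subsetP sZ)].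
    by case/setDP=> _ /negP.
  have := hallX (Z :|: Y0); rewrite subUset sY0X (subset_trans sZ (subsetDl _ _)).
  rewrite nbhU nbhD -/B cardsU disjZ cards0 subn0 cardsD => /(_ isT).
  move: tight; rewrite -/B; have := cardsUI (nbh adj Z) B.
  by have := subset_leq_card (subsetIr (nbh adj Z) B); lia.
exists (fun x => if x \in Y0 then f1 x else f2 x).
by apply: matching_glue match2 => // y yY; apply: subsetP (sub_nbh adj yY) _ (match1.2 y yY).
Qed.

(* Otherwise any x may be matched to any neighbour r, and removing r keeps
   Hall's condition on the rest. *)
Lemma hall_slack_step adj X : #|X| = m.+1 -> hall_condition adj X ->
  (forall Y, Y != set0 -> Y \proper X -> #|Y| < #|nbh adj Y|) ->
  exists f, matching adj X f.
Proof.
move=> cardX hallX slack.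
have [x xX] : {x | x \in X} by apply/sigW/set0Pn; rewrite -card_gt0 cardX.
have [r rx] : {r | r \in adj x}.
  apply/sigW/set0Pn; rewrite -card_gt0 -nbh1.
  by apply: leq_trans (hallX _ _); rewrite ?cards1 ?sub1set.
have [f' match'] : exists f', matching (fun y => adj y :\: [set r]) (X :\: [set x]) f'.
  apply: IH => [|Z sZ]; first by move: (cardsD1 x X); rewrite xX cardX add1n => -[<-].
  rewrite nbhD cardsD; have := subset_leq_card (subsetIr (nbh adj Z) [set r]).
  rewrite cards1; have [->|Zn0] := eqVneq Z set0; first by rewrite cards0.
  have ZX : Z \proper X.
    rewrite properEneq (subset_trans sZ (subsetDl _ _)) andbT.
    by apply: contraTneq xX => <-; apply/negP=> /(subsetP sZ)/setDP[_]; rewrite inE eqxx.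
  by have := slack Z Zn0 ZX; lia.
exists (fun y => if y \in [set x] then r else f' y).
apply: matching_glue match' => [|| y]; rewrite ?sub1set //.
  by split=> [y z|y]; rewrite !inE => /eqP-> // /eqP->.
by rewrite set11.
Qed.

End InductionStep.

Theorem hall adj X : hall_condition adj X -> exists f, matching adj X f.
Proof.
move: {2}#|X| (leqnn #|X|) => m; elim: m adj X => [|m IH] adj X cardX hallX.
  exists (fun _ => r0); move: cardX; rewrite leqn0 cards_eq0 => /eqP->.
  by split=> x; rewrite inE.
have [leXm|ltmX] := leqP #|X| m; first exact: IH.
have cardXm : #|X| = m.+1 by apply/eqP; rewrite eqn_leq cardX ltmX.
have [Y0 /and3P[Y0n0 Y0X tight]|noTight] :=
  pickP [pred Y | [&& Y != set0, Y \proper X & #|nbh adj Y| <= #|Y|]].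
  exact: (hall_tight_step IH) cardXm hallX Y0n0 Y0X tight.
apply: (hall_slack_step IH cardXm hallX) => Y Yn0 YX.
by have := noTight Y; rewrite /= Yn0 YX /= => /negbT; rewrite -ltnNge.
Qed.

End Hall.

Lemma no_perfect_matching_rectangle n (good : 'I_n -> 'I_n -> bool) :
  ~~ [exists s : {perm 'I_n}, [forall j, good (s j) j]] ->
  exists S T : {set 'I_n}, n < #|S| + #|T| /\ {in S & T, forall i j, ~~ good i j}.
Proof.
case: n good => [|n] good noPM.
  by case/existsP: noPM; exists 1%g; apply/forallP => -[].
pose adj j := [set i | good i j].
have [/forallP hallT|] := boolP [forall Y : {set 'I_n.+1}, #|Y| <= #|nbh adj Y|].
  have [f [injf adjf]] := hall ord0 (X := setT) (fun Y _ => hallT Y).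
  have {}injf : injective f by move=> x y; apply: injf; rewrite inE.
  case/existsP: noPM; exists (perm injf); apply/forallP=> j.
  by rewrite permE; have := adjf j; rewrite !inE => ->.
rewrite negb_forall => /existsP[Y]; rewrite -ltnNge => ltY.
exists (~: nbh adj Y), Y; split.
  suff : #|nbh adj Y| + #|~: nbh adj Y| < #|~: nbh adj Y| + #|Y|.
    by rewrite cardsC card_ord.
  by rewrite addnC ltn_add2l.
move=> i j; rewrite inE => iY jY; apply: contra iY => gij.
by apply: (subsetP (sub_nbh adj jY)); rewrite inE.
Qed.

Lemma card_no_perfect_matching (U : finType) n (good : U -> 'I_n -> 'I_n -> bool) :
  #|[set u | ~~ [exists s : {perm 'I_n}, [forall j, good u (s j) j]]]| <=
  \sum_(p : {set 'I_n} * {set 'I_n} | n < #|p.1| + #|p.2|) \sum_u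
    \prod_i \prod_j (if (i \in p.1) && (j \in p.2) then ~~ good u i j : nat else 1).
Proof.
rewrite -sum1_card big_mkcond exchange_big /=; apply: leq_sum => u _.
rewrite inE; case: ifP => // /no_perfect_matching_rectangle[S [T [ltST badST]]].
rewrite (bigD1 (S, T)) //= big1 ?leq_addr // => i _; apply: big1 => j _.
by case: ifP => // /andP[iS jT]; rewrite badST.
Qed.

Lemma sum_tuple_cons (C : finType) m (F : seq C -> nat) :
  \sum_(t : m.+1.-tuple C) F t = \sum_c \sum_(t : m.-tuple C) F (c :: t).
Proof.
rewrite pair_big /= (reindex (fun p : C * m.-tuple C => cons_tuple p.1 p.2)) //.
exists (fun t => (thead t, behead_tuple t)) => [[c t]|t] _ /=.
  by congr pair; apply: val_inj.
by apply: val_inj; case: t => -[|x s].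
Qed.

Lemma sum_ffun_tuple (C : finType) n (F : seq C -> nat) :
  \sum_(w : {ffun 'I_n -> C}) F [seq w l | l <- enum 'I_n] = \sum_(t : n.-tuple C) F t.
Proof.
rewrite (reindex (fun t : n.-tuple C => [ffun l => tnth t l])) /=; last first.
  exists (fun w : {ffun 'I_n -> C} => [tuple w l | l < n]) => [t _|w _].
    by apply: eq_from_tnth => l; rewrite tnth_mktuple ffunE.
  by apply/ffunP=> l; rewrite ffunE tnth_mktuple.
apply: eq_bigr => t _; congr F.
by rewrite -[RHS](map_tnth_enum t); apply: eq_map => l; rewrite ffunE.
Qed.

Lemma sum_ffun_curry (C : finType) n (F : {ffun 'I_n * 'I_n -> C} -> nat) :
  \sum_u F u = \sum_(g : {ffun 'I_n -> {ffun 'I_n -> C}}) F [ffun p => g p.1 p.2].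
Proof.
rewrite (reindex (fun g : {ffun 'I_n -> {ffun 'I_n -> C}} => [ffun p => g p.1 p.2])) //.
exists (fun u : {ffun 'I_n * 'I_n -> C} => [ffun i => [ffun j => u (i, j)]]) => [g _|u _].
  by apply/ffunP=> i; apply/ffunP=> j; rewrite !ffunE.
by apply/ffunP=> -[i j]; rewrite !ffunE.
Qed.

Section ChainCount.
Variables (V : Type) (C : finType) (step : V -> C -> V) (run : V -> seq C -> V).
Variables (inv bad : pred V) (K : nat).
Hypothesis run_nil : forall x, run x [::] = x.
Hypothesis run_cons : forall x c s, run x (c :: s) = run (step x c) s.
Hypothesis step_inv : forall x c, inv x -> inv (step x c).
Hypothesis card_bad_step : forall x, inv x -> #|[set c | bad (step x c)]| <= K.

Lemma sum_bad_step x : inv x -> \sum_c (bad (step x c) : nat) <= K.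
Proof.
move=> invx; apply: leq_trans (card_bad_step invx) => {invx}.
by rewrite -sum1_card [X in _ <= X]big_mkcond; apply: leq_sum => c _; rewrite inE; case: bad.
Qed.

Lemma chain_bad_count m x (P : pred nat) : inv x ->
  \sum_(t : m.-tuple C) \prod_(j < m)
     (if P j then bad (run x (take j.+1 t)) : nat else 1)
  <= \prod_(j < m) (if P j then K else #|C|).
Proof.
elim: m x P => [|m IH] x P invx.
  by rewrite big_ord0 (eq_bigr (fun _ => 1)) ?sum1_card ?card_tuple // => t _; rewrite big_ord0.
rewrite (sum_tuple_cons m (fun s => \prod_(j < m.+1)
  (if P j then bad (run x (take j.+1 s)) : nat else 1))) big_ord_recl.
under eq_bigr => c _ do under eq_bigr => t _ do (rewrite big_ord_recl /= take0 run_cons run_nil;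
  under eq_bigr => j _ do rewrite run_cons).
under eq_bigr => c _ do rewrite -big_distrr /=.
apply: leq_trans (_ : \sum_c (if P 0 then bad (step x c) : nat else 1) *
    \prod_(j < m) (if P (bump 0 j) then K else #|C|) <= _).
  apply: leq_sum => c _; apply: leq_mul => //.
  exact: (IH _ (fun j => P j.+1) (step_inv c invx)).
rewrite -big_distrl leq_mul //=; case: (P 0); first exact: sum_bad_step.
by rewrite sum1_card.
Qed.

(* Row i of the matrix only reads the coordinates u (i, _), so the count
   factorizes over the rows. *)
Lemma chain_matrix_bad_count n (A : 'I_n -> V) (S T : {set 'I_n}) :
  (forall i, inv (A i)) ->
  \sum_(u : {ffun 'I_n * 'I_n -> C}) \prod_i \prod_j (if (i \in S) && (j \in T)
     then bad (run (A i) [seq u (i, l) | l <- take j.+1 (enum 'I_n)]) : nat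
     else 1)
  <= \prod_i \prod_j (if (i \in S) && (j \in T) then K else #|C|).
Proof.
move=> invA; rewrite sum_ffun_curry.
pose G i (w : {ffun 'I_n -> C}) := \prod_j (if (i \in S) && (j \in T)
  then bad (run (A i) (take j.+1 [seq w l | l <- enum 'I_n])) : nat else 1).
rewrite (eq_bigr (fun g : {ffun 'I_n -> {ffun 'I_n -> C}} => \prod_i G i (g i))) => [|g _];
  last first.
  apply: eq_bigr => i _; apply: eq_bigr => j _; rewrite -map_take.
  by congr (if _ then (bad (run _ _) : nat) else _); apply: eq_map => l; rewrite ffunE.
rewrite -bigA_distr_bigA; apply: leq_prod => i _.
rewrite /G (sum_ffun_tuple n (fun s => \prod_j (if (i \in S) && (j \in T)
  then bad (run (A i) (take j.+1 s)) : nat else 1))).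
pose P j := (i \in S) && (j \in [seq val j | j <- enum T]).
have PE (j : 'I_n) : P j = (i \in S) && (j \in T) by rewrite /P (mem_map val_inj) mem_enum.
apply: leq_trans (leq_trans _ (chain_bad_count n P (invA i))) _.
  by apply/eq_leq/eq_bigr => t _; apply: eq_bigr => j _; rewrite PE.
by apply/eq_leq/eq_bigr => j _; rewrite PE.
Qed.

End ChainCount.

Section Bidc.
Variable N : nat.
Implicit Types (E : seq ('I_N * 'I_N)) (e : 'I_N * 'I_N) (X Y : {set 'I_N}).

Lemma indep_sub E X Y : Y \subset X -> indep E X -> indep E Y.
Proof.
move=> sYX /forall_inP indX; apply/forall_inP=> x xY; apply/forall_inP=> y yY.
by have /forall_inP := indX x (subsetP sYX _ xY); apply; apply: (subsetP sYX).
Qed.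

Lemma bidc_step_indep E X c : indep E X -> indep E (bidc_step E X c).
Proof.
rewrite /bidc_step => indX; case: ifP => _; first exact: indep_sub (subD1set X c) indX.
by case: ifP.
Qed.

Lemma mem_bidc_step E X c v :
  v \in bidc_step E X c -> if v \in X then c != v else c == v.
Proof.
rewrite /bidc_step; case: ifP => cX.
  by rewrite !inE => /andP[vc ->]; rewrite eq_sym.
have notc : v \in X -> c != v by move=> vX; apply: (contraFneq _ cX) => ->.
case: ifP => _; last by move=> vX; rewrite vX notc.
by rewrite !inE => /orP[/eqP->|vX]; rewrite ?cX // vX notc.
Qed.

Lemma indep_rcons E e Y : indep E Y -> ~~ indep (rcons E e) Y ->
  (e.1 \in Y) && (e.2 \in Y).
Proof.
move=> /forall_inP indY; rewrite /indep negb_forall_in => /existsP[x /andP[xY]].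
rewrite negb_forall_in => /existsP[y /andP[yY]]; rewrite negbK /adj !mem_rcons !in_cons.
have /forall_inP/(_ y yY) := indY x xY; rewrite /adj negb_or => /andP[/negbTE-> /negbTE->].
by rewrite !orbF => /orP[] /eqP <- /=; rewrite xY yY.
Qed.

Lemma card_bidc_step_not_indep E e X : 2 < N -> e.1 != e.2 -> indep E X ->
  #|[set c | ~~ indep (rcons E e) (bidc_step E X c)]| <= N - 2.
Proof.
move=> N3 e12 indX; set bad := [set c | _].
have endsP c : c \in bad -> (e.1 \in bidc_step E X c) && (e.2 \in bidc_step E X c).
  by rewrite inE; apply: indep_rcons; apply: bidc_step_indep.
have chosen v : v \notin X -> {in bad, forall c, v \in bidc_step E X c} ->
    #|bad| <= N - 2.
  move=> vX vin; apply: leq_trans (_ : #|[set v]| <= _); last by rewrite cards1; lia.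
  by apply/subset_leq_card/subsetP=> c /vin/mem_bidc_step; rewrite (negbTE vX) inE.
have [e1X|e1X] := boolP (e.1 \in X); last by apply: (chosen _ e1X) => c /endsP/andP[].
have [e2X|e2X] := boolP (e.2 \in X); last by apply: (chosen _ e2X) => c /endsP/andP[].
have : bad \subset ~: [set e.1; e.2].
  apply/subsetP=> c /endsP/andP[/mem_bidc_step c1 /mem_bidc_step c2].
  by rewrite !inE negb_or; rewrite e1X in c1; rewrite e2X in c2; rewrite c1 c2.
move/subset_leq_card/leq_trans; apply.
by have := cardsC [set e.1; e.2]; rewrite cards2 e12 card_ord; lia.
Qed.

End Bidc.

Local Open Scope ring_scope.

Lemma sum_set_pow (R : comPzRingType) n (x : R) :
  \sum_(S : {set 'I_n}) x ^+ #|S| = (1 + x) ^+ n.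
Proof.
have -> : (1 + x) ^+ n = \prod_(i < n) \sum_(b : bool) (if b then x else 1).
  by rewrite prodr_const card_ord big_bool /= addrC.
rewrite bigA_distr_bigA /= (reindex (fun f : {ffun 'I_n -> bool} => [set i | f i])).
  apply: eq_bigr => f _; rewrite -prodr_const big_mkcond /=.
  by apply: eq_bigr => i _; rewrite inE.
exists (fun S : {set 'I_n} => [ffun i => i \in S]) => [f _|S _].
  by apply/ffunP=> i; rewrite ffunE inE.
by apply/setP=> i; rewrite inE ffunE.
Qed.

Lemma sum_nonempty_set_pow (R : comPzRingType) n (x : R) :
  \sum_(S : {set 'I_n} | S != set0) x ^+ #|S| = (1 + x) ^+ n - 1.
Proof. by rewrite -sum_set_pow [in RHS](bigD1 set0) //= cards0 expr0 addrC addrK. Qed.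

Lemma quad_le_exp2 m : (19 <= m)%N -> (4 * (m + 2) ^ 2 <= 2 ^ m)%N.
Proof.
elim: m => [//|m IH]; rewrite leq_eqVlt => /orP[/eqP<- //|].
rewrite ltnS => hm; have := leq_mul (leqnn 2) (IH hm).
by rewrite [(2 ^ m.+1)%N]expnS; move: (2 ^ m)%N => p; nia.
Qed.

Section Estimates.
Variable R : realType.
Implicit Types (x : R) (n : nat).

Lemma expR1_ge2 : 2 <= expR 1 :> R.
Proof. by have := expR_ge1Dx (1 : R); rewrite (_ : 1 + 1 = 2 :> R). Qed.

Lemma exp1D_le_expR x n : 0 <= 1 + x -> (1 + x) ^+ n <= expR (n%:R * x).
Proof.
by move=> x1; rewrite expRM_natl; apply: lerXn2r; rewrite ?nnegrE ?expR_ge0 ?expR_ge1Dx.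
Qed.

Lemma expR_sub1_le x : expR x - 1 <= x * expR x.
Proof.
have := expR_ge1Dx (- x); rewrite expRN -(ler_pM2r (expR_gt0 x)) mulVf ?gt_eqF ?expR_gt0 //.
lra.
Qed.

Lemma exp1D_sub1_le x n : 0 <= x -> n%:R * x <= 1 ->
  (1 + x) ^+ n - 1 <= expR 1 * (n%:R * x).
Proof.
move=> x0 nx1; set d := n%:R * x.
have d0 : 0 <= d by rewrite mulr_ge0 ?ler0n.
have := exp1D_le_expR n (addr_ge0 ler01 x0); rewrite -/d => hpow.
have := expR_sub1_le d; have : expR d <= expR 1 by rewrite ler_expR.
have := expR_ge0 d; nra.
Qed.

(* This is (1 + 1/n)^n <= e. *)
Lemma pow_succ_div_le n : (0 < n)%N ->
  (1 + n%:R) ^+ n / n%:R ^+ n.+1 <= expR 1 / n%:R :> R.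
Proof.
move=> n0; have nR0 : 0 < n%:R :> R by rewrite ltr0n.
have -> : (1 + n%:R) ^+ n / n%:R ^+ n.+1 = (1 + n%:R^-1) ^+ n / n%:R :> R.
  rewrite (_ : 1 + n%:R^-1 = (1 + n%:R) / n%:R); last by field; rewrite gt_eqF.
  by rewrite expr_div_n exprSr invfM mulrA.
rewrite ler_pM2r ?invr_gt0 //; apply: le_trans (exp1D_le_expR _ _) _.
  by rewrite addr_ge0 ?invr_ge0 ?ler0n.
by rewrite mulfV ?gt_eqF.
Qed.

(* Each indicator is at most n^(a + |T| - n - 1). *)
Lemma sum_large_sets_le n a : (0 < n)%N ->
  \sum_(T : {set 'I_n}) ((n < a + #|T|)%N)%:R
    <= n%:R ^+ a * ((1 + n%:R) ^+ n / n%:R ^+ n.+1) :> R.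
Proof.
move=> n0; have nR0 : 0 < n%:R :> R by rewrite ltr0n.
rewrite -sum_set_pow mulr_suml mulr_sumr; apply: ler_sum => T _.
rewrite mulrA -exprD ler_pdivlMr ?exprn_gt0 //.
case: ltnP => [lt|_]; last by rewrite mul0r exprn_ge0 // ler0n.
by rewrite mul1r ler_weXn2l // ?ler1n // addnC.
Qed.

Lemma sum_large_pairs_le n x : (0 < n)%N -> 0 <= x ->
  \sum_(p : {set 'I_n} * {set 'I_n} | (n < #|p.1| + #|p.2|)%N) x ^+ #|p.1|
    <= expR 1 / n%:R * ((1 + x * n%:R) ^+ n - 1).
Proof.
move=> n0 x0; pose c : R := (1 + n%:R) ^+ n / n%:R ^+ n.+1.
have nx0 : 0 <= x * n%:R by rewrite mulr_ge0 ?ler0n.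
apply: (@le_trans _ _ (c * ((1 + x * n%:R) ^+ n - 1))); last first.
  by rewrite ler_wpM2r ?pow_succ_div_le // subr_ge0 exprn_ege1 // lerDl.
rewrite big_mkcond /= -(pair_bigA _ (fun S T : {set 'I_n} =>
  if (n < #|S| + #|T|)%N then x ^+ #|S| else 0)) /=.
have inner S : \sum_(T : {set 'I_n}) (if (n < #|S| + #|T|)%N then x ^+ #|S| else 0)
    = x ^+ #|S| * \sum_(T : {set 'I_n}) ((n < #|S| + #|T|)%N)%:R.
  by rewrite mulr_sumr; apply: eq_bigr => T _; case: ltnP; rewrite ?mulr1 ?mulr0.
rewrite (bigD1 set0) //= big1 ?add0r => [|T _]; last first.
  by rewrite cards0 add0n ltnNge -[X in (_ <= X)%N](card_ord n) max_card.
rewrite -sum_nonempty_set_pow mulr_sumr; apply: ler_sum => S _.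
rewrite inner exprMn mulrCA ler_wpM2l ?exprn_ge0 // [c * _]mulrC.
exact: sum_large_sets_le.
Qed.

Lemma sum_large_pairs_le_small n x : (0 < n)%N -> 0 <= x -> n%:R * (x * n%:R) <= 1 ->
  \sum_(p : {set 'I_n} * {set 'I_n} | (n < #|p.1| + #|p.2|)%N) x ^+ #|p.1|
    <= expR 1 ^+ 2 * n%:R * x.
Proof.
move=> n0 x0 small; have nR0 : 0 < n%:R :> R by rewrite ltr0n.
apply: le_trans (sum_large_pairs_le n0 x0) _.
rewrite [X in _ <= X](_ : _ = expR 1 / n%:R * (expR 1 * (n%:R * (x * n%:R)))).
  by rewrite ler_pM2l ?divr_gt0 ?expR_gt0 // exp1D_sub1_le ?mulr_ge0 ?ler0n.
by field; rewrite gt_eqF.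
Qed.

Lemma expR_growth N : (21 <= N)%N -> 4 * expR 1 ^+ 2 * N%:R ^+ 2 <= expR N%:R :> R.
Proof.
move=> N21; have [m -> m19] : exists2 m, N = (m + 2)%N & (19 <= m)%N by exists (N - 2)%N; lia.
rewrite -[(m + 2)%:R]mulr1 expRM_natl mulr1 exprD mulrAC ler_pM2r ?exprn_gt0 ?expR_gt0 //.
apply: le_trans (_ : (2 ^ m)%:R <= _); first by rewrite -natrX -natrM ler_nat quad_le_exp2.
by rewrite natrX lerXn2r ?nnegrE ?ler0n ?expR_ge0 ?expR1_ge2.
Qed.

Lemma ratio_pow_le_expR N : (2 <= N)%N ->
  ((N - 2)%:R / N%:R) ^+ (N ^ 2) <= expR (- N%:R) ^+ 2 :> R.
Proof.
move=> N2; have NR0 : 0 < N%:R :> R by rewrite ltr0n; lia.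
have -> : (N - 2)%:R / N%:R = 1 + (- 2 / N%:R) :> R.
  by rewrite natrB //; field; rewrite gt_eqF.
apply: le_trans (exp1D_le_expR _ _) _.
  by rewrite mulNr subr_ge0 ler_pdivrMr // mul1r ler_nat.
rewrite -expRM_natl natrX (_ : N%:R ^+ 2 * (- 2 / N%:R) = 2%:R * - N%:R) //.
by field; rewrite gt_eqF.
Qed.

End Estimates.

Lemma sum_rectangles_pow_le (R : realDomainType) n m (q : R) :
  (2 * m <= n + 1)%N -> 0 <= q <= 1 ->
  \sum_(p : {set 'I_n} * {set 'I_n} | (n < #|p.1| + #|p.2|)%N) q ^+ (#|p.1| * #|p.2|)
  <= 2 * \sum_(p : {set 'I_n} * {set 'I_n} | (n < #|p.1| + #|p.2|)%N) (q ^+ m) ^+ #|p.1|.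
Proof.
move=> nm /andP[q0 q1]; set P := fun p : {set 'I_n} * {set 'I_n} => (n < #|p.1| + #|p.2|)%N.
have short a b : (n < a + b)%N -> (a <= b)%N -> q ^+ (a * b) <= (q ^+ m) ^+ a.
  move=> ab le_ab; rewrite -exprM; apply: ler_wiXn2l => //.
  by rewrite mulnC leq_mul2l; apply/orP; right; lia.
have swap : \sum_(p | P p) (q ^+ m) ^+ #|p.2| = \sum_(p | P p) (q ^+ m) ^+ #|p.1|.
  rewrite (reindex (fun p : {set 'I_n} * {set 'I_n} => (p.2, p.1))) /=.
    by apply: eq_bigl => p; rewrite /P addnC.
  by exists (fun p => (p.2, p.1)) => -[].
rewrite mulr_natl mulr2n -[X in _ <= _ + X]swap -big_split /=.
apply: ler_sum => -[S T] /= lt; have [le_ST|/ltnW le_TS] := leqP #|S| #|T|.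
  by apply: le_trans (short _ _ lt le_ST) _; rewrite lerDl !exprn_ge0.
rewrite mulnC; apply: le_trans (short _ _ _ le_TS) _; first by rewrite addnC.
by rewrite lerDr !exprn_ge0.
Qed.

Lemma prod_rectangle (R : comPzSemiRingType) n (S T : {set 'I_n}) (x : R) :
  \prod_i \prod_j (if (i \in S) && (j \in T) then x else 1) = x ^+ (#|S| * #|T|).
Proof.
rewrite mulnC exprM -prodr_const [RHS]big_mkcond; apply: eq_bigr => i _.
case: (i \in S); last by rewrite big1.
by rewrite -prodr_const [RHS]big_mkcond.
Qed.

Lemma natr_prod_rectangle (R : fieldType) n (S T : {set 'I_n}) (a b : nat) :
  b%:R != 0 :> R ->
  ((\prod_i \prod_j (if (i \in S) && (j \in T) then a else b))%N)%:R
    = b%:R ^+ (n * n) * (a%:R / b%:R) ^+ (#|S| * #|T|) :> R.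
Proof.
move=> b0; rewrite -prod_rectangle natr_prod.
under eq_bigr => i _ do rewrite natr_prod.
have split c : ((if c then a else b)%N)%:R = b%:R * (if c then a%:R / b%:R else 1) :> R.
  by case: c; rewrite ?mulr1 // mulrC mulfVK.
under eq_bigr => i _ do under eq_bigr => j _ do rewrite split.
under eq_bigr => i _ do rewrite big_split /=.
by rewrite big_split /= !prodr_const !card_ord exprM.
Qed.

Section Rectangles.
Variable R : realType.

Lemma sum_large_rectangles_le N : (21 <= N)%N ->
  \sum_(p : {set 'I_(nn N)} * {set 'I_(nn N)} | (nn N < #|p.1| + #|p.2|)%N)
     ((N - 2)%:R / N%:R) ^+ (#|p.1| * #|p.2|) <= expR (- N%:R) :> R.
Proof.
move=> N21; have NR0 : 0 < N%:R :> R by rewrite ltr0n; lia.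
set q : R := _ / _; set t := expR (- N%:R); set r := q ^+ (N ^ 2); set n := nn N.
have q01 : 0 <= q <= 1.
  by rewrite divr_ge0 ?ler0n // ler_pdivrMr // mul1r ler_nat leq_subr.
have r0 : 0 <= r by rewrite exprn_ge0 //; case/andP: q01.
have rt : r <= t ^+ 2 by apply: ratio_pow_le_expR; lia.
have t0 : 0 < t by apply: expR_gt0.
have key : 4 * expR 1 ^+ 2 * N%:R ^+ 2 * t <= 1.
  by rewrite /t expRN ler_pdivrMr ?expR_gt0 // mul1r expR_growth.
have nE : n%:R = 2 * N%:R ^+ 2 :> R by rewrite /n /nn natrM natrX.
have n0 : (0 < n)%N by rewrite /n /nn; lia.
have nR0 : 0 < n%:R :> R by rewrite ltr0n.
have e1 : 1 <= expR 1 :> R by apply: le_trans (expR1_ge2 R); rewrite ler1n.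
have N2 : 0 <= N%:R ^+ 2 :> R by rewrite exprn_ge0 ?ler0n.
have e2 : 1 <= expR 1 ^+ 2 :> R by rewrite exprn_ege1.
have Nt : 2 * N%:R ^+ 2 * t <= 1.
  apply: le_trans _ key; rewrite ler_pM2r // ler_pM2r ?exprn_gt0 //.
  by apply: le_trans (_ : 4 * 1 <= _); [rewrite mulr1 ler_nat | rewrite ler_wpM2l].
have rn : n%:R * (r * n%:R) <= 1.
  rewrite mulrCA -expr2 mulrC nE; apply: le_trans (_ : (2 * N%:R ^+ 2) ^+ 2 * t ^+ 2 <= 1).
    by rewrite ler_wpM2l ?exprn_ge0 ?mulr_ge0.
  by rewrite -exprMn exprn_ile1 // mulr_ge0 ?mulr_ge0 ?ltW.
apply: le_trans (sum_rectangles_pow_le (m := N ^ 2) _ q01) _; first by rewrite /n /nn; lia.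
apply: le_trans (_ : 2 * (expR 1 ^+ 2 * n%:R * r) <= _).
  by rewrite ler_pM2l // sum_large_pairs_le_small.
have -> : 2 * (expR 1 ^+ 2 * n%:R * r) = (4 * expR 1 ^+ 2 * N%:R ^+ 2) * r.
  by rewrite nE; ring.
apply: le_trans (_ : (4 * expR 1 ^+ 2 * N%:R ^+ 2) * t ^+ 2 <= _).
  by rewrite ler_wpM2l // !mulr_ge0 ?ler0n ?exprn_ge0 ?expR_ge0.
by rewrite [t ^+ 2]expr2 mulrA -[X in _ <= X]mul1r ler_pM2r.
Qed.

End Rectangles.

Lemma card_no_H_PM_le N (Ek : seq ('I_N * 'I_N)) e (A : {ffun 'I_(nn N) -> {set 'I_N}}) :
  (2 < N)%N -> e.1 != e.2 -> (forall i, indep Ek (A i)) ->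
  (#|[set u : {ffun 'I_(nn N) * 'I_(nn N) -> 'I_N} | ~~ has_H_PM (rcons Ek e) (Xmat Ek A u)]|
   <= \sum_(p : {set 'I_(nn N)} * {set 'I_(nn N)} | nn N < #|p.1| + #|p.2|)
        \prod_i \prod_j (if (i \in p.1) && (j \in p.2) then N - 2 else N))%N.
Proof.
move=> N3 e12 indA.
apply: leq_trans (card_no_perfect_matching
  (fun u i j => indep (rcons Ek e) (Xmat Ek A u i j))) _.
apply: leq_sum => p _; rewrite -[X in (_ <= \prod_i \prod_j (if _ then _ else X))%N]card_ord.
apply: (chain_matrix_bad_count (step := bidc_step Ek) (run := bidc_run Ek)
  (inv := indep Ek) (bad := fun X => ~~ indep (rcons Ek e) X)) => // X c.
  exact: bidc_step_indep.
exact: card_bidc_step_not_indep.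
Qed.

Lemma no_H_PM_prob_le (R : realType) N (Ek : seq ('I_N * 'I_N)) e
    (A : {ffun 'I_(nn N) -> {set 'I_N}}) :
  (21 <= N)%N -> e.1 != e.2 -> (forall i, indep Ek (A i)) ->
  #|[set u : {ffun 'I_(nn N) * 'I_(nn N) -> 'I_N} | ~~ has_H_PM (rcons Ek e) (Xmat Ek A u)]|%:R
   / #|{ffun 'I_(nn N) * 'I_(nn N) -> 'I_N}|%:R <= expR (- N%:R) :> R.
Proof.
move=> N21 e12 indA; have N0 : N%:R != 0 :> R by rewrite pnatr_eq0; lia.
have card_u : #|{ffun 'I_(nn N) * 'I_(nn N) -> 'I_N}| = (N ^ (nn N * nn N))%N.
  by rewrite card_ffun card_prod !card_ord.
rewrite card_u ler_pdivrMr ?ltr0n ?expn_gt0 ?orbT; last by lia.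
apply: le_trans (_ : (\sum_(p : {set 'I_(nn N)} * {set 'I_(nn N)} | nn N < #|p.1| + #|p.2|)
    \prod_i \prod_j (if (i \in p.1) && (j \in p.2) then N - 2 else N))%N%:R <= _).
  by rewrite ler_nat card_no_H_PM_le //; lia.
rewrite natr_sum; under eq_bigr => p _ do rewrite natr_prod_rectangle //.
by rewrite -mulr_sumr natrX mulrC ler_pM2r ?exprn_gt0 ?ltr0n ?sum_large_rectangles_le //; lia.
Qed.

Theorem theorem4 (R : realType) (N : nat) (E : seq ('I_N * 'I_N)) (k : nat)
  (mu : {ffun {ffun 'I_(nn N) -> {set 'I_N}} -> R}) :
  (21 <= N)%N ->
  simple_edges E ->
  (k < size E)%N ->
  (forall A, 0 <= mu A) ->
  \sum_A mu A = 1 ->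
  (forall A, mu A != 0 -> forall i, indep (take k E) (A i)) ->
  \sum_A mu A *
    (#|[set u : {ffun 'I_(nn N) * 'I_(nn N) -> 'I_N} |
         ~~ has_H_PM (take k.+1 E) (Xmat (take k E) A u)]|%:R
     / #|{ffun 'I_(nn N) * 'I_(nn N) -> 'I_N}|%:R)
  <= expR (- N%:R).
Proof.
move=> N21 [noloop _] kE mu0 mu1 indA.
have N0 : (0 < N)%N by lia.
pose v0 := Ordinal N0.
rewrite (take_nth (v0, v0) kE).
apply: le_trans (_ : \sum_A mu A * expR (- N%:R) <= _); last by rewrite -mulr_suml mu1 mul1r.
apply: ler_sum => A _; have [->|muA] := eqVneq (mu A) 0; first by rewrite !mul0r.
have e12 : (nth (v0, v0) E k).1 != (nth (v0, v0) E k).2 := noloop _ (mem_nth _ kE).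
by rewrite ler_wpM2l ?mu0 ?(no_H_PM_prob_le _ N21 e12 (indA A muA)).
Qed.
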